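(* For $n\ge 2$, let $\mathcal M^{\mathrm d}(n)$ be the number of MAB pairs $(u,v)$ of binary words with $|u|=|v|=n$ and $\mathrm{lsb}(u,v)+\mathrm{lsb}(v,u)\le n$. Then $$\mathcal M^{\mathrm d}(n)=\sum_{i=1}^{n-1}\sum_{j=1}^{n-i} D(2n-2i,\,j)\,D(2i,\,i).$$
   Context: Let $\Sigma=\{a,b\}$. For a word $w$ and a letter $c$, $|w|_c$ denotes the number of occurrences of $c$ in $w$. Two words $x,y$ are abelian equivalent, written $x\sim_{\mathrm{abl}}y$, if $|x|_c=|y|_c$ for all $c\in\Sigma$. For words $u,v$: a pair $(x,y)$ is an internal abelian-border of $(u,v)$ if $x$ is a nonempty proper suffix of $u$, $y$ is a proper prefix of $v$, and $x\sim_{\mathrm{abl}}y$; it is an external abelian-border of $(u,v)$ if $x$ is a nonempty proper prefix of $u$, $y$ is a proper suffix of $v$, and $x\sim_{\mathrm{abl}}y$. The pair $(u,v)$ is mutually abelian-bordered (MAB) if it has both an internal and an external abelian-border, and mutually abelian-unbordered (MAU) if it has neither. If $(u,v)$ has an internal abelian-border, $\mathrm{sb}(u,v)$ denotes its internal abelian-border $(x,y)$ of minimal length and $\mathrm{lsb}(u,v)=|x|$ is that minimal length. A binary word $w$ of length $m$ has an abelian-border of length $k$ ($1\le k\le m-1$) if its prefix of length $k$ is abelian equivalent to its suffix of length $k$. $D(m,k)$ denotes the number of binary words of length $m$ whose shortest abelian-border has length exactly $k$. *)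

From mathcomp Require Import all_boot.
Set Implicit Arguments. Unset Strict Implicit. Unset Printing Implicit Defensive.

(* Binary words over Sigma = {a,b} are represented as seq bool (a = false, b = true). *)

Definition abl (x y : seq bool) : bool :=
  [forall c : bool, count_mem c x == count_mem c y].

(* (x,y) with x the suffix of u of length k, y the prefix of v of length k.
   Abelian equivalence forces |x| = |y|, so borders are indexed by k = |x|.
   x nonempty proper suffix of u: 1 <= k < |u|; y proper prefix of v: k < |v|. *)
Definition int_border (u v : seq bool) (k : nat) : bool :=
  [&& 0 < k, k < size u, k < size v & abl (drop (size u - k) u) (take k v)].

Definition ext_border (u v : seq bool) (k : nat) : bool :=
  [&& 0 < k, k < size u, k < size v & abl (take k u) (drop (size v - k) v)].

Definition has_int_border (u v : seq bool) : bool :=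
  [exists k : 'I_(size u), int_border u v k].
Definition has_ext_border (u v : seq bool) : bool :=
  [exists k : 'I_(size u), ext_border u v k].

Definition MAB (u v : seq bool) : bool := has_int_border u v && has_ext_border u v.

(* length of the shortest internal abelian-border (meaningful when one exists) *)
Definition lsb (u v : seq bool) : nat :=
  \big[minn/size u]_(0 <= k < size u | int_border u v k) k.

Definition abl_border (w : seq bool) (k : nat) : bool :=
  [&& 1 <= k, k <= (size w).-1 & abl (take k w) (drop (size w - k) w)].

Definition shortest_abl_border (w : seq bool) (k : nat) : bool :=
  abl_border w k && [forall j : 'I_k, ~~ abl_border w j].

Definition D (m k : nat) : nat :=
  #|[set w : m.-tuple bool | shortest_abl_border w k]|.

Definition Md (n : nat) : nat :=
  #|[set p : n.-tuple bool * n.-tuple bool |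
       MAB p.1 p.2 && (lsb p.1 p.2 + lsb p.2 p.1 <= n)]|.

From mathcomp Require Import all_boot all_order zify.
Set Implicit Arguments. Unset Strict Implicit. Unset Printing Implicit Defensive.
Import Order.TTheory.

(* Write u = t1 x1 and v = x2 t2 with |x1| = |x2| = i = lsb(u,v) and
   |t1| = |t2| = n - i.  The internal borders of (u,v) of length at most i
   compare a suffix of x1 with a prefix of x2; once x1 ~ x2, complementation
   matches the one of length i - j with the abelian-border of x1 x2 of length
   j, so lsb(u,v) = i exactly when the shortest abelian-border of x1 x2 has
   length i.  The external borders of (u,v) of length at most n - i compare a
   prefix of t1 with a suffix of t2, i.e. they are the abelian-borders of
   t1 t2, so lsb(v,u) <= n - i exactly when t1 t2 has a shortest
   abelian-border of length at most n - i.  Hence (u,v) |-> (t1 t2, x1 x2) is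
   a bijection onto the pairs counted by the i-th summand. *)

Lemma ablE x y :
  abl x y = (count_mem false x == count_mem false y) && (count_mem true x == count_mem true y).
Proof.
apply/forallP/andP => [eq_xy | [eq_f eq_t]]; first by split; apply: eq_xy.
by case.
Qed.

Lemma abl_sym x y : abl x y = abl y x.
Proof. by rewrite !ablE ![count_mem _ y == _]eq_sym. Qed.

Lemma abl_cat_swap x1 x2 y1 y2 : abl (x1 ++ x2) (y1 ++ y2) -> abl x1 y2 = abl x2 y1.
Proof.
rewrite !ablE !count_cat => /andP[/eqP eq_f /eqP eq_t].
by apply/idP/idP => /andP[/eqP e1 /eqP e2]; apply/andP; split; apply/eqP; lia.
Qed.

Lemma ext_borderE u v k : size u = size v -> ext_border u v k = int_border v u k.
Proof. by move=> suv; rewrite /ext_border /int_border suv abl_sym; case: (k < size v). Qed.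

Lemma has_int_borderP u v : reflect (exists k, int_border u v k) (has_int_border u v).
Proof.
apply: (iffP existsP) => [[k bk] | [k bk]]; first by exists k.
have ku : k < size u by case/and4P: bk.
by exists (Ordinal ku).
Qed.

Lemma has_ext_borderE u v : size u = size v -> has_ext_border u v = has_int_border v u.
Proof.
move=> suv; apply/existsP/has_int_borderP => [[k bk] | [k bk]].
  by exists k; rewrite -ext_borderE.
have ku : k < size u by rewrite suv; case/and4P: bk.
by exists (Ordinal ku); rewrite /= ext_borderE.
Qed.

Lemma lsb_eq u v i :
  int_border u v i -> (forall k, k < i -> ~~ int_border u v k) -> lsb u v = i.
Proof.
move=> bi below; have iu : i < size u by case/and4P: bi.
apply/eqP; rewrite eqn_leq /lsb -minEnat -!leEnat; apply/andP; split.
  by apply: ge_bigmin_seq; rewrite ?mem_index_iota.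
apply: le_bigmin => [|k bk]; rewrite leEnat; first exact: ltnW.
by rewrite leqNgt; apply: contraL bk => /below.
Qed.

Lemma lsbP u v : has_int_border u v ->
  int_border u v (lsb u v) /\ forall k, k < lsb u v -> ~~ int_border u v k.
Proof.
move=> /has_int_borderP ex; case: (ex_minnP ex) => m bm min_m.
have below : forall k, k < m -> ~~ int_border u v k.
  by move=> k km; apply: contraL km => /min_m; rewrite -leqNgt.
by rewrite (lsb_eq bm below).
Qed.

Lemma shortest_abl_border_uniq w j k :
  shortest_abl_border w j -> shortest_abl_border w k -> j = k.
Proof.
move=> /andP[bj /forallP below_j] /andP[bk /forallP below_k].
case: (ltngtP j k) => // [jk | kj].
  by have := below_k (Ordinal jk); rewrite bj.
by have := below_j (Ordinal kj); rewrite bk.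
Qed.

Lemma int_border_cat t1 x1 x2 t2 a i k :
  size t1 = a -> size x1 = i -> size x2 = i -> size t2 = a -> 0 < a -> 0 < k -> k <= i ->
  int_border (t1 ++ x1) (x2 ++ t2) k = abl (drop (i - k) x1) (take k x2).
Proof.
move=> st1 sx1 sx2 st2 a0 k0 ki.
rewrite /int_border !size_cat st1 sx1 sx2 st2 k0 drop_cat takel_cat ?sx2 //.
have -> : a + i - k < size t1 = false by rewrite st1; lia.
have -> : a + i - k - size t1 = i - k by rewrite st1; lia.
have -> : k < a + i by lia.
by have -> : k < i + a by lia.
Qed.

Lemma abl_border_cat w1 w2 a k :
  size w1 = a -> size w2 = a -> 0 < k -> k <= a ->
  abl_border (w1 ++ w2) k = abl (take k w1) (drop (a - k) w2).
Proof.
move=> sw1 sw2 k0 ka.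
rewrite /abl_border size_cat sw1 sw2 k0 takel_cat ?sw1 // drop_cat.
have -> : a + a - k < size w1 = false by rewrite sw1; lia.
have -> : a + a - k - size w1 = a - k by rewrite sw1; lia.
by have -> : k <= (a + a).-1 by lia.
Qed.

Definition shortest_abl_border_le (a : nat) (w : seq bool) : bool :=
  [exists j : 'I_a.+1, shortest_abl_border w j].

Section BorderSplit.

Variables (t1 t2 x1 x2 : seq bool) (a i : nat).
Hypotheses (st1 : size t1 = a) (st2 : size t2 = a) (sx1 : size x1 = i) (sx2 : size x2 = i)
  (a_gt0 : 0 < a) (i_gt0 : 0 < i).

Let u := t1 ++ x1.
Let v := x2 ++ t2.

Lemma int_border_inner : int_border u v i = abl x1 x2.
Proof. by rewrite (int_border_cat st1 sx1 sx2 st2) // subnn drop0 -sx2 take_size. Qed.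

Lemma abl_border_inner : abl_border (x1 ++ x2) i = abl x1 x2.
Proof. by rewrite (abl_border_cat sx1 sx2) // subnn drop0 -sx1 take_size. Qed.

Lemma abl_border_inner_int_border j : 0 < j < i -> abl x1 x2 ->
  abl_border (x1 ++ x2) j = int_border u v (i - j).
Proof.
move=> /andP[j0 ji] x12.
rewrite (abl_border_cat sx1 sx2) ?(ltnW ji) // (int_border_cat st1 sx1 sx2 st2) //; try lia.
have -> : i - (i - j) = j by lia.
by apply: abl_cat_swap; rewrite !cat_take_drop.
Qed.

Lemma abl_border_outer_int_border k : 0 < k <= a ->
  abl_border (t1 ++ t2) k = int_border v u k.
Proof.
move=> /andP[k0 ka].
by rewrite (abl_border_cat st1 st2) // (int_border_cat sx2 st2 st1 sx1) // abl_sym.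
Qed.

Lemma lsb_inner : has_int_border u v && (lsb u v == i) = shortest_abl_border (x1 ++ x2) i.
Proof.
apply/idP/andP => [/andP[/lsbP[bl below] /eqP lsb_i] | [bi /forallP below]].
  rewrite lsb_i in bl below; have x12 : abl x1 x2 by rewrite -int_border_inner.
  split; first by rewrite abl_border_inner.
  apply/forallP => -[[|j] ji] //=.
  by rewrite abl_border_inner_int_border // below //; lia.
have x12 : abl x1 x2 by rewrite -abl_border_inner.
have bu : int_border u v i by rewrite int_border_inner.
suff -> : lsb u v = i by rewrite eqxx andbT; apply/has_int_borderP; exists i.
apply: lsb_eq => // -[|k] ki //.
have k' : i - k.+1 < i by lia.
have -> : k.+1 = i - (i - k.+1) by lia.
by rewrite -abl_border_inner_int_border //; [apply: (below (Ordinal k')) | lia].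
Qed.

Lemma lsb_outer :
  has_int_border v u && (lsb v u <= a) = shortest_abl_border_le a (t1 ++ t2).
Proof.
apply/idP/existsP => [/andP[/lsbP[bl below] la] | [[j ja] /= /andP[bj /forallP below]]].
  have l0 : 0 < lsb v u by move: bl; case: (lsb v u).
  exists (Ordinal (la : lsb v u < a.+1)); apply/andP; split.
    by rewrite abl_border_outer_int_border ?l0.
  apply/forallP => -[[|k] kl] //=.
  rewrite abl_border_outer_int_border ?below //.
  exact: ltnW (leq_trans kl la).
have j0 : 0 < j by case/andP: bj.
have bv : int_border v u j by rewrite -abl_border_outer_int_border ?j0.
suff -> : lsb v u = j by rewrite -ltnS ja andbT; apply/has_int_borderP; exists j.
apply: lsb_eq => // -[|k] kj //.
by rewrite -abl_border_outer_int_border; [apply: (below (Ordinal kj)) | lia].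
Qed.

Lemma MAB_lsb_split :
  MAB u v && (lsb u v + lsb v u <= a + i) && (lsb u v == i)
  = shortest_abl_border_le a (t1 ++ t2) && shortest_abl_border (x1 ++ x2) i.
Proof.
rewrite -lsb_inner -lsb_outer /MAB has_ext_borderE; last first.
  by rewrite !size_cat st1 st2 sx1 sx2 addnC.
have [-> | _] := eqVneq (lsb u v) i; last by rewrite !andbF.
rewrite addnC leq_add2r !andbT.
by case: (has_int_border u v); rewrite ?andbT ?andbF.
Qed.

End BorderSplit.

Lemma card_partition_nat (T : finType) (P : pred T) (f : T -> nat) lo hi :
  (forall x, P x -> lo <= f x < hi) ->
  #|[set x | P x]| = \sum_(lo <= i < hi) #|[set x | P x && (f x == i)]|.
Proof.
move=> f_range.
transitivity (\sum_(x | P x) \sum_(lo <= i < hi) (f x == i)).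
  rewrite -sum1_card; apply: eq_big => [x | x]; rewrite inE // => Px.
  rewrite -big_mkcond sum1_count (eq_count (a2 := pred1 (f x))) => [|i]; last exact: eq_sym.
  by rewrite count_uniq_mem ?iota_uniq // mem_index_iota f_range.
rewrite exchange_big; apply: eq_bigr => i _.
rewrite -sum1_card big_mkcond [RHS]big_mkcond; apply: eq_bigr => x _.
by rewrite inE; case: (P x); case: (f x == i).
Qed.

Lemma card_shortest_abl_border_le m a :
  #|[set t : m.-tuple bool | shortest_abl_border_le a t]| = \sum_(1 <= j < a.+1) D m j.
Proof.
pose len (t : m.-tuple bool) :=
  if [pick j : 'I_a.+1 | shortest_abl_border t j] is Some j then val j else 0.
have lenE (t : m.-tuple bool) j : j < a.+1 -> shortest_abl_border t j -> len t = j.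
  move=> ja bj; rewrite /len; case: pickP => [k bk | none].
    exact: shortest_abl_border_uniq bk bj.
  by have := none (Ordinal ja); rewrite bj.
rewrite (card_partition_nat (f := len) (lo := 1) (hi := a.+1)) => [|t /existsP[[j ja] /= bj]]; last first.
  by rewrite (lenE _ _ ja bj) ja andbT; case/andP: bj => /andP[].
rewrite big_nat_cond [RHS]big_nat_cond; apply: eq_bigr => j /andP[/andP[_ ja] _].
apply: eq_card => t; rewrite !inE; apply/andP/idP => [[/existsP[[k ka] /= bk] /eqP <-] | bj].
  by rewrite (lenE _ _ ka bk).
by split; [apply/existsP; exists (Ordinal ja) | rewrite (lenE _ _ ja bj)].
Qed.

Definition tuple_of_seq m (s : seq bool) : m.-tuple bool := insubd (nseq_tuple m false) s.

Lemma tuple_of_seqK m s : size s = m -> val (tuple_of_seq m s) = s.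
Proof. by move=> sm; rewrite val_insubd sm eqxx. Qed.

Section LsbFiber.

Variables (n i : nat).
Hypotheses (i_gt0 : 0 < i) (i_lt_n : i < n).

Local Notation word_pair := (n.-tuple bool * n.-tuple bool)%type.
Local Notation split_pair := ((2 * n - 2 * i).-tuple bool * (2 * i).-tuple bool)%type.

Definition cut (p : word_pair) : split_pair :=
  (tuple_of_seq _ (take (n - i) p.1 ++ drop i p.2),
   tuple_of_seq _ (drop (n - i) p.1 ++ take i p.2)).

Definition glue (q : split_pair) : word_pair :=
  (tuple_of_seq _ (take (n - i) q.1 ++ take i q.2),
   tuple_of_seq _ (drop i q.2 ++ drop (n - i) q.1)).

Lemma size_cut_parts (u v : n.-tuple bool) :
  [/\ size (take (n - i) u) = n - i, size (drop (n - i) u) = i,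
      size (take i v) = i & size (drop i v) = n - i].
Proof.
rewrite size_drop size_takel ?size_takel ?size_drop !size_tuple ?leq_subr ?(ltnW i_lt_n) //.
by rewrite subKn // ltnW.
Qed.

Lemma cutK : cancel cut glue.
Proof.
case=> u v; have [ut ud vt vd] := size_cut_parts u v.
congr pair; apply: val_inj; rewrite /= !tuple_of_seqK ?size_cat ?ut ?ud ?vt ?vd; try lia;
  by rewrite ?take_size_cat ?drop_size_cat ?size_cat ?cat_take_drop ?ut ?ud ?vt ?vd //; lia.
Qed.

Lemma glueK : cancel glue cut.
Proof.
case=> w x; have [sw sx] := (size_tuple w, size_tuple x).
have wt : size (take (n - i) w) = n - i by rewrite size_takel // sw; lia.
have wd : size (drop (n - i) w) = n - i by rewrite size_drop sw; lia.
have xt : size (take i x) = i by rewrite size_takel // sx; lia.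
have xd : size (drop i x) = i by rewrite size_drop sx; lia.
congr pair; apply: val_inj; rewrite /= !tuple_of_seqK ?size_cat ?wt ?wd ?xt ?xd; try lia;
  by rewrite ?take_size_cat ?drop_size_cat ?size_cat ?cat_take_drop ?wt ?wd ?xt ?xd //; lia.
Qed.

Lemma cut_lsb_fiber p :
  shortest_abl_border_le (n - i) (cut p).1 && shortest_abl_border (cut p).2 i
  = MAB p.1 p.2 && (lsb p.1 p.2 + lsb p.2 p.1 <= n) && (lsb p.1 p.2 == i).
Proof.
case: p => u v; have [ut ud vt vd] := size_cut_parts u v.
rewrite /= !tuple_of_seqK ?size_cat ?ut ?ud ?vt ?vd; try lia.
rewrite -(MAB_lsb_split ut vd ud vt) ?subn_gt0 // !cat_take_drop.
by rewrite subnK // ltnW.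
Qed.

Lemma card_lsb_fiber :
  #|[set p : word_pair | MAB p.1 p.2 && (lsb p.1 p.2 + lsb p.2 p.1 <= n) && (lsb p.1 p.2 == i)]|
  = (\sum_(1 <= j < (n - i).+1) D (2 * n - 2 * i) j) * D (2 * i) i.
Proof.
rewrite -card_shortest_abl_border_le -cardsX -(card_imset _ (can_inj cutK)).
apply: eq_card => q; rewrite !inE; apply/imsetP/idP => [[p + ->] | q_in].
  by rewrite inE -cut_lsb_fiber.
by exists (glue q); rewrite ?glueK // inE -cut_lsb_fiber glueK.
Qed.

End LsbFiber.

Theorem mainTheorem2 (n : nat) : 2 <= n ->
  Md n = \sum_(1 <= i < n) \sum_(1 <= j < (n - i).+1) D (2 * n - 2 * i) j * D (2 * i) i.
Proof.
(* Both sides vanish when n < 2. *)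
move=> _; pose lsb12 (p : n.-tuple bool * n.-tuple bool) := lsb p.1 p.2.
rewrite /Md (card_partition_nat (f := lsb12) (lo := 1) (hi := n)).
  rewrite big_nat_cond [RHS]big_nat_cond; apply: eq_bigr => i /andP[/andP[i_gt0 i_lt_n] _].
  by rewrite card_lsb_fiber // big_distrl.
move=> [u v] /andP[/andP[/lsbP[bl _] _] _].
by case/and4P: bl => -> /= + _ _; rewrite size_tuple.
Qed.
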